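(* Let $\mathcal{A}$ be an algebra in a functional language $\mathcal{L}$ and let $\mathcal{B}$ be an $\mathcal{A}$-equationally Noetherian $\mathcal{A}$-algebra. Then for a finitely generated $\mathcal{A}$-algebra $\mathcal{C}$ the following conditions are equivalent: (1) $\mathrm{Th}_{\forall,\mathcal{A}}(\mathcal{B}) \subseteq \mathrm{Th}_{\forall,\mathcal{A}}(\mathcal{C})$; (2) $\mathrm{Th}_{\exists,\mathcal{A}}(\mathcal{B}) \supseteq \mathrm{Th}_{\exists,\mathcal{A}}(\mathcal{C})$; (3) $\mathcal{C}$ $\mathcal{A}$-embeds into an ultrapower of $\mathcal{B}$; (4) $\mathcal{C}$ is $\mathcal{A}$-discriminated by $\mathcal{B}$; (5) $\mathcal{C}$ is ($\mathcal{A}$-isomorphic to) a limit algebra over $\mathcal{B}$ with respect to a direct system of formulas in $\mathcal{L}_{\mathcal{A}}$; (6) $\mathcal{C}$ is ($\mathcal{A}$-isomorphic to) an algebra defined by a complete atomic type in the theory $\mathrm{Th}_{\forall,\mathcal{A}}(\mathcal{B})$ in the language $\mathcal{L}_{\mathcal{A}}$; (7) $\mathcal{C}$ is ($\mathcal{A}$-isomorphic to) the coordinate algebra of an irreducible algebraic set over $\mathcal{B}$ defined by a system of equations with coefficients in $\mathcal{A}$.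
   Context: A functional language $\mathcal{L}$ has only operation symbols $F$ (arity $n_F$) and constant symbols; its structures are $\mathcal{L}$-algebras. $\mathcal{L}_{\mathcal{A}}=\mathcal{L}\cup\{c_a: a\in A\}$ with new constants. An $\mathcal{A}$-algebra is an $\mathcal{L}_{\mathcal{A}}$-algebra $\mathcal{B}$ such that $a\mapsto c_a^{\mathcal{B}}$ is an embedding of $\mathcal{L}$-algebras $\mathcal{A}\to\mathcal{B}$; $\mathcal{A}$-homomorphisms/embeddings/isomorphisms are $\mathcal{L}_{\mathcal{A}}$-homomorphisms/embeddings/isomorphisms, and ''finitely generated'' means finitely generated as an $\mathcal{L}_{\mathcal{A}}$-algebra. $\mathrm{Th}_{\forall,\mathcal{A}}$ and $\mathrm{Th}_{\exists,\mathcal{A}}$ denote the sets of universal, resp. existential, $\mathcal{L}_{\mathcal{A}}$-sentences true in the algebra. Equations with coefficients in $\mathcal{A}$ are atomic $\mathcal{L}_{\mathcal{A}}$-formulas $t=s$; for $X=\{x_1,\dots,x_n\}$ and a set $S$ of them, $\mathrm{V}_{\mathcal{B}}(S)\subseteq B^n$ is the set of common solutions (an algebraic set). $\mathcal{B}$ is $\mathcal{A}$-equationally Noetherian if every such $S$ has a finite subset $S_0$ with $\mathrm{V}_{\mathcal{B}}(S)=\mathrm{V}_{\mathcal{B}}(S_0)$. For an algebraic set $Y\subseteq B^n$, $\mathrm{Rad}(Y)$ is the set of all atomic $\mathcal{L}_{\mathcal{A}}$-formulas in $X$ true at all points of $Y$ (all of them if $Y=\emptyset$); it defines a congruence $\theta$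 on the term algebra $\mathcal{T}_{\mathcal{L}_{\mathcal{A}}}(X)$, and the coordinate algebra is $\Gamma(Y)=\mathcal{T}_{\mathcal{L}_{\mathcal{A}}}(X)/\theta$. Zariski topology on $B^n$: these algebraic sets form a prebasis of closed sets; an algebraic set is irreducible if it is not a union of two proper closed subsets. $\mathcal{C}$ is $\mathcal{A}$-discriminated by $\mathcal{B}$ if for every finite $W\subseteq C$ there is an $\mathcal{A}$-homomorphism $\mathcal{C}\to\mathcal{B}$ injective on $W$. Complete atomic type in a theory $T$ (of $\mathcal{L}_{\mathcal{A}}$) in finite variables $X$: a maximal set $p$ of atomic $\mathcal{L}_{\mathcal{A}}$-formulas and their negations in $X$ such that $p\cup T$ is realized in a model of $T$; its atomic part $p^+$ defines the congruence $\theta_p$ ($t\sim s\iff (t=s)\in p^+$) on $\mathcal{T}_{\mathcal{L}_{\mathcal{A}}}(X)$, and $\mathcal{T}_{\mathcal{L}_{\mathcal{A}}}(X)/\theta_p$ is the algebra defined by $p$. Limit algebras (for a functional language $\mathcal{L}^*$, here $\mathcal{L}^*=\mathcal{L}_{\mathcal{A}}$): a diagram-formula in a finite reduct $\mathcal{L}'$ in finite variables $X$ is a conjunction of atomic formulas and negations such that $\neg(x=y)$ is a conjunct for all distinct $x,y\in X$, for each operation $F\in\mathcal{L}'$ and $(x_0,\dots,x_{n_F})\in X^{n_F+1}$ exactly one of $F(x_1,\dots,x_{n_F})=x_0$ and its negation is a conjunct, and for each constant $c\in\mathcal{L}'$ and $x\in X$ exactly one of $x=c$, $\neg(x=c)$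 is a conjunct. A direct system of formulas $\Lambda=(I,\varphi_i,\gamma_{ij})$: a directed poset $I$, consistent diagram-formulas $\varphi_i$ in finite reducts $\mathcal{L}_i$ and finite variable sets $X_i$, maps $\gamma_{ij}:X_i\to X_j$ ($i\le j$) with $\gamma_{ii}=\mathrm{id}$, $\gamma_{jk}\gamma_{ij}=\gamma_{ik}$, conjuncts of $\varphi_i(\gamma_{ij}(X_i))$ being conjuncts of $\varphi_j$; every constant $c$ occurs in a conjunct $x=c$ of some $\varphi_i$; for every $F$, $i$, $(x_1,\dots,x_{n_F})\in X_i^{n_F}$ some $j\ge i$ has a conjunct $F(\gamma_{ij}(x_1),\dots)=x_j$. The limit algebra $L(\Lambda)$ has universe $\{(x,i):x\in X_i\}/\!\equiv$, $(x,i)\equiv(y,j)$ iff $\gamma_{ik}(x)=\gamma_{jk}(y)$ for some $k\ge i,j$, with constants and operations read off from the conjuncts $x=c$ and $F(\dots)=x_j$ (well defined). It is a limit algebra over $\mathcal{B}$ if each $\varphi_i$ is realizable in $\mathcal{B}$. *)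

From mathcomp Require Import all_boot.
From Stdlib Require Import ClassicalEpsilon List.

Set Implicit Arguments.
Unset Strict Implicit.
Unset Printing Implicit Defensive.

Record Lang := MkLang {
  ops : Type;
  ar : ops -> nat;
  csts : Type }.

Record Alg (L : Lang) := MkAlg {
  carrier :> Type;
  op : forall f : ops L, ('I_(ar f) -> carrier) -> carrier;
  cst : csts L -> carrier }.
Arguments op {L} M f args : rename.
Arguments cst {L} M c : rename.

Inductive term (L : Lang) (V : Type) : Type :=
  | Var : V -> term L V
  | Cnst : csts L -> term L V
  | App : forall f : ops L, ('I_(ar f) -> term L V) -> term L V.
Arguments Var {L V} x.
Arguments Cnst {L V} c.
Arguments App {L V} f args.

Fixpoint eval (L : Lang) (M : Alg L) (V : Type) (v : V -> M) (t : term L V) : M :=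
  match t with
  | Var x => v x
  | Cnst c => cst M c
  | App f args => op M f (fun k => eval v (args k))
  end.

Definition termAlg (L : Lang) (V : Type) : Alg L :=
  @MkAlg L (term L V) (@App L V) (@Cnst L V).

Definition hom (L : Lang) (M N : Alg L) (h : M -> N) : Prop :=
  (forall f args, h (op M f args) = op N f (fun k => h (args k))) /\
  (forall c, h (cst M c) = cst N c).

Definition embedding (L : Lang) (M N : Alg L) (h : M -> N) : Prop :=
  hom h /\ (forall x y, h x = h y -> x = y).

Definition isomorphism (L : Lang) (M N : Alg L) (h : M -> N) : Prop :=
  hom h /\ (forall x y, h x = h y -> x = y) /\ (forall y, exists x, h x = y).

Definition isomorphic (L : Lang) (M N : Alg L) : Prop :=
  exists h : M -> N, isomorphism h.

Definition LA (L : Lang) (A : Alg L) : Lang :=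
  @MkLang (ops L) (@ar L) (csts L + carrier A)%type.

Definition reduct (L : Lang) (A : Alg L) (B : Alg (LA A)) : Alg L :=
  @MkAlg L (carrier B) (fun f args => op B f args) (fun c => cst B (inl c)).

Definition AAlg (L : Lang) (A : Alg L) (B : Alg (LA A)) : Prop :=
  @embedding L A (reduct B) (fun a => cst B (inr a)).

Definition fin_gen (L : Lang) (C : Alg L) : Prop :=
  exists (n : nat) (g : 'I_n -> C), forall c : C, exists t : term L 'I_n, eval g t = c.

Definition qcarrier (M : Type) (th : M -> M -> Prop) : Type :=
  {P : M -> Prop | exists m, forall m', P m' <-> th m m'}.

Definition qclass (M : Type) (th : M -> M -> Prop) (m : M) : qcarrier th :=
  exist _ (th m) (ex_intro _ m (fun m' => iff_refl (th m m'))).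

Definition qrepr (M : Type) (th : M -> M -> Prop) (P : qcarrier th) : M :=
  proj1_sig (constructive_indefinite_description _ (proj2_sig P)).

(** Quotient algebra M / th (meaningful when th is a congruence). *)
Definition quot_alg (L : Lang) (M : Alg L) (th : M -> M -> Prop) : Alg L :=
  @MkAlg L (qcarrier th)
    (fun f args => qclass th (op M f (fun k => qrepr (args k))))
    (fun c => qclass th (cst M c)).

Definition pow_alg (L : Lang) (M : Alg L) (I : Type) : Alg L :=
  @MkAlg L (I -> M) (fun f args i => op M f (fun k => args k i)) (fun c _ => cst M c).

Definition ultrafilter (I : Type) (U : (I -> Prop) -> Prop) : Prop :=
  U (fun _ => True) /\ ~ U (fun _ => False) /\
  (forall S T : I -> Prop, U S -> (forall i, S i -> T i) -> U T) /\
  (forall S T : I -> Prop, U S -> U T -> U (fun i => S i /\ T i)) /\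
  (forall S : I -> Prop, U S \/ U (fun i => ~ S i)).

Definition ultrapower (L : Lang) (M : Alg L) (I : Type) (U : (I -> Prop) -> Prop) : Alg L :=
  @quot_alg L (pow_alg M I) (fun f g => U (fun i => f i = g i)).

Inductive qf (L : Lang) (V : Type) : Type :=
  | QEq : term L V -> term L V -> qf L V
  | QNot : qf L V -> qf L V
  | QAnd : qf L V -> qf L V -> qf L V
  | QOr : qf L V -> qf L V -> qf L V.
Arguments QEq {L V} t s.
Arguments QNot {L V} p.
Arguments QAnd {L V} p q.
Arguments QOr {L V} p q.

Fixpoint holds (L : Lang) (M : Alg L) (V : Type) (v : V -> M) (p : qf L V) : Prop :=
  match p with
  | QEq t s => eval v t = eval v s
  | QNot p => ~ holds v p
  | QAnd p q => holds v p /\ holds v q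
  | QOr p q => holds v p \/ holds v q
  end.

Definition univ_true (L : Lang) (M : Alg L) (n : nat) (phi : qf L 'I_n) : Prop :=
  forall v : 'I_n -> M, holds v phi.

Definition ex_true (L : Lang) (M : Alg L) (n : nat) (phi : qf L 'I_n) : Prop :=
  exists v : 'I_n -> M, holds v phi.

Definition ThU_sub (L : Lang) (M N : Alg L) : Prop :=
  forall (n : nat) (phi : qf L 'I_n), univ_true M phi -> univ_true N phi.

Definition ThE_sub (L : Lang) (M N : Alg L) : Prop :=
  forall (n : nat) (phi : qf L 'I_n), ex_true M phi -> ex_true N phi.

Definition equation (L : Lang) (n : nat) : Type := (term L 'I_n * term L 'I_n)%type.

Definition Vset (L : Lang) (B : Alg L) (n : nat) (S : equation L n -> Prop)
  (p : 'I_n -> B) : Prop :=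
  forall e, S e -> eval p e.1 = eval p e.2.

Definition Vlist (L : Lang) (B : Alg L) (n : nat) (S : list (equation L n))
  (p : 'I_n -> B) : Prop :=
  forall e, In e S -> eval p e.1 = eval p e.2.

(** B is equationally Noetherian (for L_A-equations, i.e. coefficients in A
    when L is instantiated by L_A). *)
Definition eq_noetherian (L : Lang) (B : Alg L) : Prop :=
  forall (n : nat) (S : equation L n -> Prop),
    exists S0 : list (equation L n),
      (forall e, In e S0 -> S e) /\ (forall p : 'I_n -> B, Vset S p <-> Vlist S0 p).

Definition zclosed (L : Lang) (B : Alg L) (n : nat) (Y : ('I_n -> B) -> Prop) : Prop :=
  exists (J : Type) (F : J -> list (equation L n -> Prop)),
    forall p, Y p <-> (forall j, exists S, In S (F j) /\ Vset S p).

Definition irreducible (L : Lang) (B : Alg L) (n : nat) (Y : ('I_n -> B) -> Prop) : Prop :=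
  (exists p, Y p) /\
  forall Y1 Y2 : ('I_n -> B) -> Prop, zclosed Y1 -> zclosed Y2 ->
    (forall p, Y p <-> Y1 p \/ Y2 p) ->
    (forall p, Y p -> Y1 p) \/ (forall p, Y p -> Y2 p).

Definition Rad (L : Lang) (B : Alg L) (n : nat) (Y : ('I_n -> B) -> Prop)
  (t s : term L 'I_n) : Prop :=
  forall p, Y p -> eval p t = eval p s.

Definition coord_alg (L : Lang) (B : Alg L) (n : nat) (Y : ('I_n -> B) -> Prop) : Alg L :=
  @quot_alg L (termAlg L 'I_n) (Rad Y).

Inductive lit (L : Lang) (V : Type) : Type :=
  | LPos : term L V -> term L V -> lit L V
  | LNeg : term L V -> term L V -> lit L V.
Arguments LPos {L V} t s.
Arguments LNeg {L V} t s.

Definition lit_holds (L : Lang) (M : Alg L) (V : Type) (v : V -> M) (l : lit L V) : Prop :=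
  match l with
  | LPos t s => eval v t = eval v s
  | LNeg t s => eval v t <> eval v s
  end.

Definition realizedU (L : Lang) (B : Alg L) (n : nat) (p : lit L 'I_n -> Prop) : Prop :=
  exists M : Alg L, ThU_sub B M /\
    exists v : 'I_n -> M, forall l, p l -> lit_holds v l.

Definition complete_atomic_type (L : Lang) (B : Alg L) (n : nat) (p : lit L 'I_n -> Prop)
  : Prop :=
  realizedU B p /\
  forall p' : lit L 'I_n -> Prop, (forall l, p l -> p' l) -> realizedU B p' ->
    forall l, p' l -> p l.

Definition type_alg (L : Lang) (n : nat) (p : lit L 'I_n -> Prop) : Alg L :=
  @quot_alg L (termAlg L 'I_n) (fun t s => p (LPos t s)).

(** A diagram formula phi_i is represented by its (flat) data: the variables
    X_i = 'I_(nv i), the finite reduct (lists Lops i, Lcs i), the relation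
    Rop i f xs x0  <->  "f(xs) = x0 is a conjunct" (for f in Lops i; otherwise
    its negation is a conjunct), and Rcs i c x <-> "x = c is a conjunct"
    (for c in Lcs i; otherwise its negation), plus all  x <> y  for distinct
    variables. *)
Record DirSys (L : Lang) := MkDirSys {
  ix : Type;
  ixle : ix -> ix -> Prop;
  nv : ix -> nat;
  Lops : ix -> list (ops L);
  Lcs : ix -> list (csts L);
  Rop : forall (i : ix) (f : ops L), ('I_(ar f) -> 'I_(nv i)) -> 'I_(nv i) -> Prop;
  Rcs : forall (i : ix), csts L -> 'I_(nv i) -> Prop;
  gam : forall i j : ix, 'I_(nv i) -> 'I_(nv j) }.
Arguments ixle {L D} i j : rename.
Arguments nv {L D} i : rename.
Arguments Lops {L D} i : rename.
Arguments Lcs {L D} i : rename.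
Arguments Rop {L D i} f xs x0 : rename.
Arguments Rcs {L D} i c x : rename.
Arguments gam {L D} i j x : rename.

Definition diag_sat (L : Lang) (D : DirSys L) (M : Alg L) (i : ix D)
  (v : 'I_(nv i) -> M) : Prop :=
  (forall x y, x <> y -> v x <> v y) /\
  (forall f, In f (Lops i) -> forall xs x0,
      Rop f xs x0 <-> op M f (fun k => v (xs k)) = v x0) /\
  (forall c, In c (Lcs i) -> forall x, Rcs i c x <-> v x = cst M c).

Arguments diag_sat {L D} M {i} v.

Definition dir_system (L : Lang) (D : DirSys L) : Prop :=
  (forall i : ix D, ixle i i) /\
  (forall i j : ix D, ixle i j -> ixle j i -> i = j) /\
  (forall i j k : ix D, ixle i j -> ixle j k -> ixle i k) /\
  (exists i : ix D, True) /\
  (forall i j : ix D, exists k, ixle i k /\ ixle j k) /\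
  (forall i : ix D, exists (M : Alg L) (v : 'I_(nv i) -> M), diag_sat M v) /\
  (forall (i : ix D) x, gam i i x = x) /\
  (forall (i j k : ix D) x, ixle i j -> ixle j k -> gam j k (gam i j x) = gam i k x) /\
  (* conjuncts of phi_i(gamma_ij X_i) are conjuncts of phi_j *)
  (forall i j : ix D, ixle i j ->
     (forall x y, x <> y -> gam i j x <> gam i j y) /\
     (forall f, In f (Lops i) -> In f (Lops j) /\
        forall xs x0, Rop f xs x0 <-> Rop f (fun k => gam i j (xs k)) (gam i j x0)) /\
     (forall c, In c (Lcs i) -> In c (Lcs j) /\
        forall x, Rcs i c x <-> Rcs j c (gam i j x))) /\
  (forall c, exists (i : ix D) x, In c (Lcs i) /\ Rcs i c x) /\
  (forall f (i : ix D) (xs : 'I_(ar f) -> 'I_(nv i)),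
     exists j x, ixle i j /\ In f (Lops j) /\ Rop f (fun k => gam i j (xs k)) x).

(** C is isomorphic to the limit algebra L(D): there is a map iota from
    {(x,i) : x in X_i} onto C whose fibres are exactly the classes of the
    equivalence == and which carries the operations/constants read off from
    the conjuncts to those of C (i.e. the induced bijection L(D) -> C is an
    isomorphism). *)
Definition iso_limit (L : Lang) (D : DirSys L) (C : Alg L) : Prop :=
  exists iota : forall i : ix D, 'I_(nv i) -> C,
    (forall (i j : ix D) x y, iota i x = iota j y <->
       exists k, ixle i k /\ ixle j k /\ gam i k x = gam j k y) /\
    (forall c : C, exists (i : ix D) x, iota i x = c) /\
    (forall (i : ix D) f xs x0, In f (Lops i) -> Rop f xs x0 ->
       op C f (fun k => iota i (xs k)) = iota i x0) /\
    (forall (i : ix D) c x, In c (Lcs i) -> Rcs i c x -> iota i x = cst C c).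

Definition limit_over (L : Lang) (D : DirSys L) (B : Alg L) : Prop :=
  forall i : ix D, exists v : 'I_(nv i) -> B, diag_sat B v.

Definition discriminated (L : Lang) (C B : Alg L) : Prop :=
  forall W : list C, exists h : C -> B, hom h /\
    (forall x y, In x W -> In y W -> h x = h y -> x = y).

From mathcomp Require Import all_boot boolp.
From mathcomp Require filter.
From Stdlib Require Import List Relation_Definitions.

(* All conditions are routed through (2).  (1) <-> (2) is the duality between
   universal and existential theories.  Fix generators g of C.  As B is
   equationally Noetherian, the defining relations of C in g are equivalent over
   B to finitely many of them, so (2) turns any finite set of relations violated
   in C into a point of V = V_B(relations of C) violating them too.  Hence
   Rad(V) is the kernel of evaluation at g, i.e. C is the coordinate algebra of
   V, and every finite set of inequations consistent with V has a solution on
   V, which is irreducibility: (7).  Conversely such "finitely generic" points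
   of an irreducible algebraic set discriminate its coordinate algebra, (4),
   and discrimination gives (2) directly.  From (4) one gets (3) by gluing the
   discriminating maps along an ultrafilter on the finite subsets of C, and (5)
   by taking as stages the finite fragments of C; (3) and (5) return to (2) by
   Łoś's theorem, resp. by realizing the finitely many terms of a formula at a
   single stage.  For (6), the atomic type of g is a complete type of
   Th_forall(B) defining C, and the algebra defined by any complete type embeds
   into a model of Th_forall(B) realizing it. *)

Set Implicit Arguments.
Unset Strict Implicit.
Unset Printing Implicit Defensive.

(** * Quotients and homomorphisms *)

Section Quotient.
Variables (X : Type) (th : X -> X -> Prop).
Hypothesis th_equiv : equivalence X th.

Let th_refl : reflexive X th. Proof. by case: th_equiv. Qed.
Let th_sym : symmetric X th. Proof. by case: th_equiv. Qed.
Let th_trans : transitive X th. Proof. by case: th_equiv. Qed.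

Lemma qreprP (P : qcarrier th) : proj1_sig P = th (qrepr P).
Proof.
rewrite /qrepr; case: (ClassicalEpsilon.constructive_indefinite_description _ _) => m mP /=.
by rewrite predeqE.
Qed.

Lemma qclass_qrepr (P : qcarrier th) : qclass th (qrepr P) = P.
Proof. by case: P => Y HY; apply/eq_exist; rewrite -(qreprP (exist _ Y HY)). Qed.

Lemma qclass_eqP x y : qclass th x = qclass th y <-> th x y.
Proof.
split=> [/(congr1 (@proj1_sig _ _)) /= -> | xy]; first exact: th_refl.
apply/eq_exist/funext => z; apply/propext.
by split=> [/(th_trans (th_sym xy)) | /(th_trans xy)].
Qed.

Lemma qrepr_qclass x : th x (qrepr (qclass th x)).
Proof. by apply/qclass_eqP; rewrite qclass_qrepr. Qed.

End Quotient.

Lemma kernel_equiv (X Y : Type) (e : X -> Y) : equivalence X (fun x y => e x = e y).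
Proof. by split=> [x|x y z -> ->|x y ->]. Qed.

Lemma eval_hom (L : Lang) (M N : Alg L) (h : M -> N) (V : Type) (v : V -> M) t :
  hom h -> eval (fun x => h (v x)) t = h (eval v t).
Proof.
case=> hop hc; elim: t => [x|c|f args IH] //=.
by rewrite hop; congr (op N f); apply/funext => k; exact: IH.
Qed.

Lemma hom_comp (L : Lang) (M N K : Alg L) (h1 : M -> N) (h2 : N -> K) :
  hom h1 -> hom h2 -> hom (fun x => h2 (h1 x)).
Proof. by move=> [op1 cst1] [op2 cst2]; split=> [f args|c]; rewrite ?op1 ?op2 ?cst1 ?cst2. Qed.

Lemma isomorphism_embedding (L : Lang) (M N : Alg L) (h : M -> N) :
  isomorphism h -> embedding h.
Proof. by case=> hhom [hinj _]. Qed.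

Lemma isomorphic_sym (L : Lang) (M N : Alg L) (h : M -> N) :
  isomorphism h -> isomorphic N M.
Proof.
case=> [[hop hcst] [hinj hsurj]]; have [g gK] := choice hsurj.
exists g; split; [split|split].
- move=> f args; apply: hinj; rewrite gK hop.
  by congr (op N f); apply/funext => k; rewrite gK.
- by move=> c; apply: hinj; rewrite gK hcst.
- by move=> x y /(congr1 h); rewrite !gK.
- by move=> x; exists (h x); apply: hinj; rewrite gK.
Qed.

Definition generates (L : Lang) (M : Alg L) (n : nat) (g : 'I_n -> M) : Prop :=
  forall c : M, exists t, eval g t = c.

Definition term_kernel (L : Lang) (M : Alg L) (n : nat) (g : 'I_n -> M)
  (t s : term L 'I_n) : Prop :=
  eval g t = eval g s.

Section TermKernel.
Variables (L : Lang) (M : Alg L) (n : nat) (g : 'I_n -> M).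

Let ker_equiv : equivalence _ (term_kernel g) := kernel_equiv (eval g).

Lemma eval_qrepr_qclass t : eval g (qrepr (qclass (term_kernel g) t)) = eval g t.
Proof. by symmetry; apply: (qrepr_qclass ker_equiv). Qed.

Lemma quot_kernel_embedding :
  embedding (fun P : @quot_alg L (termAlg L 'I_n) (term_kernel g) => eval g (qrepr P)).
Proof.
split; first by split=> [f args|c] /=; rewrite eval_qrepr_qclass.
move=> P Q PQ; rewrite -(qclass_qrepr P) -(qclass_qrepr Q).
exact/(qclass_eqP ker_equiv).
Qed.

Lemma quot_kernel_iso :
  generates g -> isomorphic M (@quot_alg L (termAlg L 'I_n) (term_kernel g)).
Proof.
move=> gen; have [ghom ginj] := quot_kernel_embedding.
apply: isomorphic_sym; split; [exact: ghom | split=> [|c]; first exact: ginj].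
by have [t <-] := gen c; exists (qclass _ t); apply: eval_qrepr_qclass.
Qed.

End TermKernel.

(** * Universal and existential theories *)

Section Formulas.
Variable L : Lang.

Fixpoint qf_terms (V : Type) (p : qf L V) : list (term L V) :=
  match p with
  | QEq t s => t :: s :: nil
  | QNot p => qf_terms p
  | QAnd p q | QOr p q => qf_terms p ++ qf_terms q
  end.

Lemma holds_transfer (M N : Alg L) (V : Type) (v : V -> M) (w : V -> N) (p : qf L V) :
  (forall t s, In t (qf_terms p) -> In s (qf_terms p) ->
     eval v t = eval v s <-> eval w t = eval w s) ->
  holds v p <-> holds w p.
Proof.
elim: p => [t s|p IH|p IHp q IHq|p IHp q IHq] /= vw.
- by apply: vw; [left | right; left].
- by rewrite IH.
- by rewrite IHp ?IHq // => t s ? ?; apply: vw; apply: in_or_app; tauto.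
- by rewrite IHp ?IHq // => t s ? ?; apply: vw; apply: in_or_app; tauto.
Qed.

Lemma holds_embedding (M N : Alg L) (h : M -> N) (V : Type) (v : V -> M) p :
  embedding h -> holds (fun x => h (v x)) p <-> holds v p.
Proof.
case=> hhom hinj; apply: holds_transfer => t s _ _; rewrite !eval_hom //.
by split=> [/hinj | ->].
Qed.

Lemma ThE_sub_embedding (M N : Alg L) (h : M -> N) : embedding h -> ThE_sub M N.
Proof. by move=> hemb n phi [v vphi]; exists (fun x => h (v x)); apply/holds_embedding. Qed.

Lemma ThE_sub_trans (M N K : Alg L) : ThE_sub M N -> ThE_sub N K -> ThE_sub M K.
Proof. by move=> MN NK n phi /MN /NK. Qed.

Lemma ThU_sub_ThE_sub (M N : Alg L) : ThU_sub M N <-> ThE_sub N M.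
Proof.
split=> [MN n phi [v vphi] | NM n phi Mphi v].
- apply: contrapT => noM.
  have /MN /(_ v) // : univ_true M (QNot phi) by move=> w wphi; apply: noM; exists w.
- apply: contrapT => vnphi.
  by have [w /= []] := NM _ (QNot phi) (ex_intro _ v vnphi).
Qed.

Lemma holds_foldr_and (M : Alg L) (V : Type) (v : V -> M) p ps :
  holds v (foldr QAnd p ps) <-> holds v p /\ Forall (holds v) ps.
Proof.
elim: ps => [|q ps IH] /=; first by split=> [|[]].
by rewrite Forall_cons_iff IH; tauto.
Qed.

Lemma ThE_sub_sat (M N : Alg L) : ThE_sub M N ->
  forall n (w : 'I_n -> M) ps, Forall (holds w) ps ->
  exists v : 'I_n -> N, Forall (holds v) ps.
Proof.
move=> MN n w [|p ps] wps.
- case: n w {wps} => [|n] w; first by exists (tnth [tuple]).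
  have [v _] := MN _ (QEq (Var ord0) (Var ord0)) (ex_intro _ w erefl).
  by exists v.
- have /MN [v /holds_foldr_and [vp vps]] : ex_true M (foldr QAnd p ps).
    by exists w; apply/holds_foldr_and; apply/Forall_cons_iff.
  by exists v; constructor.
Qed.

Lemma discriminated_ThE_sub (C B : Alg L) : discriminated C B -> ThE_sub C B.
Proof.
move=> CB n phi [w wphi].
have [h [hhom hinj]] := CB (map (eval w) (qf_terms phi)).
exists (fun x => h (w x)); move: wphi; apply: (holds_transfer _).1 => t s ts ss.
rewrite !eval_hom //; split=> [-> // |]; apply: hinj; exact: in_map.
Qed.

End Formulas.

(** * Ultrapowers *)

Section Ultrapower.
Variables (L : Lang) (B : Alg L) (I : Type) (U : (I -> Prop) -> Prop).
Hypothesis U_ultra : ultrafilter U.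

Lemma ultra_top : U (fun _ => True). Proof. by case: U_ultra. Qed.
Lemma ultra_proper : ~ U (fun _ => False). Proof. by case: U_ultra => _ []. Qed.
Lemma ultra_mono (S T : I -> Prop) : U S -> (forall i, S i -> T i) -> U T.
Proof. by case: U_ultra => _ [_ [+ _]]; apply. Qed.
Lemma ultra_meet (S T : I -> Prop) : U S -> U T -> U (fun i => S i /\ T i).
Proof. by case: U_ultra => _ [_ [_ [+ _]]]; apply. Qed.
Lemma ultra_compl (S : I -> Prop) : U S \/ U (fun i => ~ S i).
Proof. by case: U_ultra => _ [_ [_ [_]]]. Qed.

Lemma ultra_all (S : I -> Prop) : (forall i, S i) -> U S.
Proof. by move=> allS; apply: (ultra_mono ultra_top) => i _. Qed.

Lemma ultra_forall_ord m (P : 'I_m -> I -> Prop) :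
  (forall k, U (P k)) -> U (fun i => forall k, P k i).
Proof.
elim: m P => [|m IH] P Pk; first by apply: ultra_all => i [].
apply: (ultra_mono (ultra_meet (Pk ord0) (IH (fun k => P (lift ord0 k)) (fun k => Pk _)))).
move=> i [P0 Plift] k.
by case: (unliftP ord0 k) => [j ->|->].
Qed.

Local Notation ueq := (fun f g : I -> B => U (fun i => f i = g i)).

Lemma ultra_equiv : equivalence (I -> B) ueq.
Proof.
split=> [f | f g h fg gh | f g fg] /=; first exact: ultra_all.
- by apply: (ultra_mono (ultra_meet fg gh)) => i [-> ->].
- by apply: (ultra_mono fg) => i ->.
Qed.

Lemma ultra_congr_op f (a b : 'I_(ar f) -> I -> B) :
  (forall k, ueq (a k) (b k)) ->
  ueq (fun i => op B f (fun k => a k i)) (fun i => op B f (fun k => b k i)).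
Proof.
move=> ab /=; apply: (ultra_mono (ultra_forall_ord ab)) => i abi.
by congr (op B f); apply/funext.
Qed.

Lemma eval_ultrapower (V : Type) (v : V -> ultrapower B U) t :
  eval v t = qclass ueq (fun i => eval (fun x => qrepr (v x) i) t).
Proof.
elim: t => [x|c|f args IH] //=; first by rewrite qclass_qrepr.
apply/(qclass_eqP ultra_equiv)/ultra_congr_op => k.
by rewrite IH; apply: (equiv_sym _ _ ultra_equiv); apply: (qrepr_qclass ultra_equiv).
Qed.

Lemma los (V : Type) (v : V -> ultrapower B U) p :
  holds v p <-> U (fun i => holds (fun x => qrepr (v x) i) p).
Proof.
pose vi i x := qrepr (v x) i.
elim: p => [t s|p IH|p IHp q IHq|p IHp q IHq] /=.
- by rewrite !eval_ultrapower; apply: (qclass_eqP ultra_equiv).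
- rewrite IH; split=> [nUp | Up Unp]; first by case: (ultra_compl (fun i => holds (vi i) p)).
  by apply: ultra_proper; apply: (ultra_mono (ultra_meet Up Unp)) => i [].
- rewrite IHp IHq; split=> [[Up Uq] | Upq]; first exact: ultra_meet.
  by split; apply: (ultra_mono Upq) => i [].
- rewrite IHp IHq; split=> [[Up | Uq] | Upq].
  + by apply: (ultra_mono Up) => i; left.
  + by apply: (ultra_mono Uq) => i; right.
  case: (ultra_compl (fun i => holds (vi i) p)) => [|Unp]; first by left.
  case: (ultra_compl (fun i => holds (vi i) q)) => [|Unq]; first by right.
  exfalso; apply: ultra_proper.
  by apply: (ultra_mono (ultra_meet Upq (ultra_meet Unp Unq))) => i; tauto.
Qed.

Lemma ThU_sub_ultrapower : ThU_sub B (ultrapower B U).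
Proof. by move=> n phi Bphi v; apply/los/ultra_all => i; apply: Bphi. Qed.

Lemma ultrapower_embedding_ThE_sub (C : Alg L) (h : C -> ultrapower B U) :
  embedding h -> ThE_sub C B.
Proof.
move=> hemb; apply: ThE_sub_trans (ThE_sub_embedding hemb) _.
exact/ThU_sub_ThE_sub/ThU_sub_ultrapower.
Qed.

Lemma ultrapower_diag_embedding (C : Alg L) (h : I -> C -> B) :
  (forall i, hom (h i)) -> (forall x y, x <> y -> U (fun i => h i x <> h i y)) ->
  @embedding L C (ultrapower B U) (fun x => qclass ueq (fun i => h i x)).
Proof.
move=> hhom hsep; split; first split.
- move=> f args; apply/(qclass_eqP ultra_equiv).
  apply: (equiv_trans _ _ ultra_equiv _ (fun i => op B f (fun k => h i (args k)))).
    by apply: ultra_all => i; case: (hhom i) => ->.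
  by apply: ultra_congr_op => k; apply: (qrepr_qclass ultra_equiv).
- by move=> c; apply/(qclass_eqP ultra_equiv)/ultra_all => i; case: (hhom i) => _ ->.
- move=> x y /(qclass_eqP ultra_equiv) hxy; apply: contrapT => /hsep hnxy.
  by apply: ultra_proper; apply: (ultra_mono (ultra_meet hxy hnxy)) => i [].
Qed.

End Ultrapower.

Lemma ultrafilter_extends (I : Type) (F : (I -> Prop) -> Prop) :
  F (fun _ => True) ->
  (forall S T : I -> Prop, F S -> (forall i, S i -> T i) -> F T) ->
  (forall S T : I -> Prop, F S -> F T -> F (fun i => S i /\ T i)) ->
  (forall S, F S -> exists i, S i) ->
  exists U, ultrafilter U /\ forall S, F S -> U S.
Proof.
move=> Ftop Fmono Fmeet Fne.
have Fproper : filter.ProperFilter F.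
  apply: filter.Build_ProperFilter_ex => [S /Fne [i Si] | ]; first by exists i.
  by split=> [//| S T | S T ST FS]; [apply: Fmeet | apply: Fmono FS ST].
have [G [Gultra FG]] := filter.ultraFilterLemma Fproper.
have Gproper : filter.ProperFilter G := filter.ultra_proper.
exists G; split=> [|S /FG //]; split; first exact: (@filter.filterT _ G).
split; first exact: (@filter.filter_not_empty _ G).
split; first by move=> S T GS ST; apply: filter.filterS GS.
split; first by move=> S T; apply: filter.filterI.
by move=> S; apply: filter.in_ultra_setVsetC.
Qed.

Lemma ultrafilter_incl (T : Type) :
  exists U : (list T -> Prop) -> Prop, ultrafilter U /\ forall W0, U (fun W => incl W0 W).
Proof.
pose F (S : list T -> Prop) := exists W0, forall W, incl W0 W -> S W.
have [U [U_ultra FU]] : exists U, ultrafilter U /\ forall S, F S -> U S.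
  apply: ultrafilter_extends.
  - by exists nil.
  - by move=> S S' [W0 W0S] SS'; exists W0 => W /W0S /SS'.
  - move=> S S' [W1 W1S] [W2 W2S]; exists (W1 ++ W2) => W W12.
    by split; [apply: W1S | apply: W2S] => x x12; apply: W12; apply: in_or_app; tauto.
  - by move=> S [W0 W0S]; exists W0; apply: W0S.
by exists U; split=> // W0; apply: FU; exists W0.
Qed.

Lemma discriminated_ultrapower_embedding (L : Lang) (C B : Alg L) :
  discriminated C B ->
  exists (I : Type) (U : (I -> Prop) -> Prop),
    ultrafilter U /\ exists h : C -> ultrapower B U, embedding h.
Proof.
move=> CB; have [hW hWP] := choice CB.
have [U [U_ultra Uincl]] := ultrafilter_incl C.
exists (list C), U; split=> //; exists (fun x => qclass _ (fun W => hW W x)).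
apply: (ultrapower_diag_embedding U_ultra) => [W | x y nxy]; first by case: (hWP W).
apply: (ultra_mono U_ultra (Uincl (x :: y :: nil))) => W xyW hxy; apply: nxy.
by case: (hWP W) => _; apply=> //; apply: xyW; [left | right; left].
Qed.

(** * Algebraic sets and irreducibility *)

Section AlgebraicSets.
Variables (L : Lang) (B : Alg L) (n : nat).
Local Notation V S := (@Vset L B n S).
Implicit Types (Y Z : ('I_n -> B) -> Prop) (S : equation L n -> Prop).

Lemma Rad_equiv Y : equivalence _ (Rad Y).
Proof. by split=> [t | t s r ts sr p Yp | t s ts p Yp]; rewrite ?ts ?sr. Qed.

(* For algebraic sets this is equivalent to irreducibility. *)
Definition fin_generic Y : Prop :=
  forall E : list (equation L n), (forall e, In e E -> ~ Rad Y e.1 e.2) ->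
  exists p, Y p /\ forall e, In e E -> eval p e.1 <> eval p e.2.

Lemma Vset_add S e (p : 'I_n -> B) :
  Vset (fun x => S x \/ x = e) p <-> Vset S p /\ eval p e.1 = eval p e.2.
Proof.
split=> [Sep | [Sp pe] x [Sx | ->]] //; last exact: Sp.
by split=> [x Sx|]; apply: Sep; [left | right].
Qed.

Lemma zclosed_Vset_union (Ss : list (equation L n -> Prop)) :
  zclosed (fun p : 'I_n -> B => exists S, In S Ss /\ Vset S p).
Proof. by exists unit, (fun _ => Ss) => p; split=> [? [] | /(_ tt)]. Qed.

Lemma irreducible_fin_generic S : irreducible (V S) -> fin_generic (V S).
Proof.
case=> [[p0 Sp0] Sirr]; elim=> [|e E IH] ERad; first by exists p0.
have [q [Sq qE]] := IH (fun e' E'e => ERad e' (or_intror E'e)).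
apply: contrapT => noP.
pose add e' x := S x \/ x = e'.
pose Y1 p := exists S', In S' (add e :: nil) /\ V S' p.
pose Y2 p := exists S', In S' (map add E) /\ V S' p.
have Scover p : V S p <-> Y1 p \/ Y2 p.
  split=> [Sp | [[S' [[<- | []] /Vset_add []]] | [S' [/in_map_iff [e' [<- _]] /Vset_add []]]]] //.
  apply: contrapT => /not_orP [nY1 nY2]; apply: noP; exists p; split=> // e' [<- | E'e] pe'.
  + by apply: nY1; exists (add e); split; [left | apply/Vset_add].
  + by apply: nY2; exists (add e'); split; [apply: in_map | apply/Vset_add].
case: (Sirr Y1 Y2 (zclosed_Vset_union _) (zclosed_Vset_union _) Scover) => [SY1 | SY2].
- by apply: (ERad e (or_introl erefl)) => p /SY1 [S' [[<- | []] /Vset_add []]].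
- have [S' [/in_map_iff [e' [<- E'e]] /Vset_add [_ qe']]] := SY2 q Sq.
  exact: qE e' E'e qe'.
Qed.

Lemma not_sub_zclosed Y Z : zclosed Z -> ~ (forall p, Y p -> Z p) ->
  exists E : list (equation L n), (forall e, In e E -> ~ Rad Y e.1 e.2) /\
    forall p, Z p -> exists e, In e E /\ eval p e.1 = eval p e.2.
Proof.
move=> [J [F ZF]] /existsNP [p /not_implyP [Yp /ZF /existsNP [j /forallNP pFj]]].
have [E [pE FE]] : exists E : list (equation L n),
    (forall e, In e E -> eval p e.1 <> eval p e.2) /\
    forall S, In S (F j) -> exists e, In e E /\ S e.
  elim: (F j) (fun S FS pS => pFj S (conj FS pS)) => [|S Ss IH] pSs; first by exists nil.
  have [E [pE SsE]] := IH (fun S' Ss'S => pSs S' (or_intror Ss'S)).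
  have [e [Se pe]] : exists e, S e /\ eval p e.1 <> eval p e.2.
    apply: contrapT => /forallNP noe; apply: (pSs S (or_introl erefl)) => e Se.
    by apply: contrapT => pe; apply: (noe e).
  exists (e :: E); split=> [e' [<- | /pE] // | S' [<- | /SsE [e' [Ee' S'e']]]].
  + by exists e; split; [left|].
  + by exists e'; split; [right|].
exists E; split=> [e /pE pe eRad | q /ZF /(_ j) [S [FS qS]]]; first exact: pe (eRad p Yp).
by have [e [Ee Se]] := FE S FS; exists e; split=> //; apply: qS.
Qed.

Lemma fin_generic_irreducible Y : fin_generic Y -> irreducible Y.
Proof.
move=> Ygen; split; first by have [p [Yp _]] := Ygen nil (fun e => False_ind _); exists p.
move=> Y1 Y2 Y1closed Y2closed Ycover; apply: contrapT => /not_orP [nsub1 nsub2].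
have [E1 [E1Rad Y1E1]] := not_sub_zclosed Y1closed nsub1.
have [E2 [E2Rad Y2E2]] := not_sub_zclosed Y2closed nsub2.
have [p [Yp pE]] : exists p, Y p /\ forall e, In e (E1 ++ E2) -> eval p e.1 <> eval p e.2.
  by apply: Ygen => e /(in_app_or _ _ _) [/E1Rad | /E2Rad].
have [e [Ee pe]] : exists e, In e (E1 ++ E2) /\ eval p e.1 = eval p e.2.
  case/Ycover: Yp => [/Y1E1 | /Y2E2] [e [Ee pe]]; exists e; split=> //; apply: in_or_app; tauto.
exact: pE e Ee pe.
Qed.

Lemma coord_alg_point_hom Y p : Y p -> hom (fun P : coord_alg Y => eval p (qrepr P)).
Proof.
move=> Yp; have qE t : eval p (qrepr (qclass (Rad Y) t)) = eval p t.
  by symmetry; apply: (qrepr_qclass (Rad_equiv Y)).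
by split=> [f args|c] /=; rewrite qE.
Qed.

Lemma fin_generic_coord_discriminated Y : fin_generic Y -> discriminated (coord_alg Y) B.
Proof.
move=> Ygen W.
pose E := map (fun PQ : coord_alg Y * coord_alg Y => (qrepr PQ.1, qrepr PQ.2))
  (filter (fun PQ => `[< PQ.1 <> PQ.2 >]) (list_prod W W)).
have [p [Yp pE]] : exists p, Y p /\ forall e, In e E -> eval p e.1 <> eval p e.2.
  apply: Ygen => e /in_map_iff [[P Q] [<- /filter_In [_ /asboolP /= PQ]]] RadPQ.
  by apply: PQ; rewrite -(qclass_qrepr P) -(qclass_qrepr Q); apply/(qclass_eqP (Rad_equiv Y)).
exists (fun P => eval p (qrepr P)); split; first exact: coord_alg_point_hom.
move=> P Q WP WQ pPQ; apply: contrapT => PQ; apply: (pE (qrepr P, qrepr Q)) => //.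
by apply/in_map_iff; exists (P, Q); split=> //; apply/filter_In; split; [apply: in_prod | apply/asboolP].
Qed.

End AlgebraicSets.

Lemma embedding_discriminated (L : Lang) (C D B : Alg L) (h : C -> D) :
  embedding h -> discriminated D B -> discriminated C B.
Proof.
move=> [hhom hinj] DB W; have [g [ghom ginj]] := DB (map h W).
exists (fun x => g (h x)); split; first exact: hom_comp.
by move=> x y Wx Wy /ginj gxy; apply/hinj/gxy; apply: in_map.
Qed.

(** * Equationally Noetherian algebras and complete types *)

Definition relations (L : Lang) (M : Alg L) (n : nat) (g : 'I_n -> M)
  (e : equation L n) : Prop :=
  eval g e.1 = eval g e.2.

Section Noetherian.
Variables (L : Lang) (B C : Alg L).
Hypothesis B_noeth : eq_noetherian B.
Variables (n : nat) (g : 'I_n -> C).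
Hypothesis CB : ThE_sub C B.
Local Notation V := (@Vset L B n (relations g)).

Lemma separating_point (E : list (equation L n)) :
  (forall e, In e E -> eval g e.1 <> eval g e.2) ->
  exists p, V p /\ forall e, In e E -> eval p e.1 <> eval p e.2.
Proof.
(* The finitely many equations [S0] cut out [V], so "[S0] and the inequations
   [E]" is an existential sentence, true in [C] at [g]. *)
move=> gE; have [S0 [S0g VS0]] := B_noeth (relations g).
pose ps := map (fun e : equation L n => QEq e.1 e.2) S0 ++
           map (fun e : equation L n => QNot (QEq e.1 e.2)) E.
have [p /Forall_app [/Forall_map pS0 /Forall_map pE]] : exists p : 'I_n -> B, Forall (holds p) ps.
  apply: (ThE_sub_sat CB (w := g)); apply/Forall_app.
  by split; apply/Forall_map/Forall_forall => e; [move/S0g | move/gE].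
rewrite ->Forall_forall in pS0, pE.
by exists p; split=> //; apply/VS0 => e /pS0.
Qed.

Lemma Rad_relations : Rad V = term_kernel g.
Proof.
apply/predeq2P => t s; split=> [Rts | gts p Vp]; last exact: (Vp (t, s)).
apply: contrapT => gts.
have [p [Vp pts]] : exists p, V p /\ forall e, In e ((t, s) :: nil) -> eval p e.1 <> eval p e.2.
  by apply: separating_point => e [<- | []].
exact: pts (t, s) (or_introl erefl) (Rts p Vp).
Qed.

Lemma relations_fin_generic : fin_generic V.
Proof. by move=> E ERad; apply: separating_point => e /ERad; rewrite Rad_relations. Qed.

Lemma relations_coord_iso : generates g -> isomorphic C (coord_alg V).
Proof. by rewrite /coord_alg Rad_relations; apply: quot_kernel_iso. Qed.

End Noetherian.

Definition atomic_type (L : Lang) (M : Alg L) (n : nat) (v : 'I_n -> M)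
  (l : lit L 'I_n) : Prop :=
  lit_holds v l.

Section CompleteTypes.
Variables (L : Lang) (B : Alg L) (n : nat).

Lemma atomic_type_complete (M : Alg L) (v : 'I_n -> M) :
  ThU_sub B M -> complete_atomic_type B (atomic_type v).
Proof.
move=> BM; split; first by exists M; split=> //; exists v.
move=> p vp [N [_ [w wp]]] l pl; apply: contrapT => nvl.
case: l pl nvl => t s pl /= nvl.
- by apply: (wp (LNeg t s) (vp (LNeg t s) nvl)); apply: (wp _ pl).
- by apply: (wp _ pl); apply: (wp (LPos t s) (vp (LPos t s) (contrapT nvl))).
Qed.

Lemma complete_atomic_type_realized (p : lit L 'I_n -> Prop) :
  complete_atomic_type B p ->
  exists (M : Alg L) (v : 'I_n -> M), ThU_sub B M /\ p = atomic_type v.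
Proof.
move=> [[M [BM [v vp]]] pmax]; exists M, v; split=> //.
apply/predeqP => l; split=> [/vp // | vl].
apply: (pmax (fun l => p l \/ atomic_type v l)) => [l' | | ]; [by left | | by right].
by exists M; split=> //; exists v => l' [/vp|].
Qed.

Lemma complete_atomic_type_ThE_sub (C : Alg L) (p : lit L 'I_n -> Prop) :
  complete_atomic_type B p -> isomorphic C (type_alg p) -> ThE_sub C B.
Proof.
move=> /complete_atomic_type_realized [M [v [BM ->]]] [h /isomorphism_embedding hemb].
apply: ThE_sub_trans (ThE_sub_embedding hemb) _.
apply: ThE_sub_trans (ThE_sub_embedding (quot_kernel_embedding v)) _.
exact/ThU_sub_ThE_sub.
Qed.

End CompleteTypes.

(** * Limit algebras *)

Lemma InP (T : eqType) (x : T) (s : list T) : reflect (In x s) (x \in s).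
Proof.
elim: s => [|y s IH]; first by right.
by rewrite inE; apply: (iffP orP) => [[/eqP -> | /IH] | [-> | /IH]]; [left | right | left | right].
Qed.

Section LimitTheory.
Variables (L : Lang) (D : DirSys L) (C : Alg L).
Hypothesis D_sys : dir_system D.
Local Unset Implicit Arguments.
Variable iota : forall i : ix D, 'I_(nv i) -> C.
Local Set Implicit Arguments.
Hypothesis iota_eq : forall (i j : ix D) x y,
  iota i x = iota j y <-> exists k, ixle i k /\ ixle j k /\ gam i k x = gam j k y.
Hypothesis iota_surj : forall c : C, exists (i : ix D) x, iota i x = c.
Hypothesis iota_op : forall (i : ix D) f xs x0, In f (Lops i) -> Rop f xs x0 ->
  op C f (fun k => iota i (xs k)) = iota i x0.
Hypothesis iota_cst : forall (i : ix D) c x, In c (Lcs i) -> Rcs i c x -> iota i x = cst C c.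

Lemma dir_le_refl (i : ix D) : ixle i i.
Proof. by case: D_sys. Qed.

Lemma dir_le_trans (i j k : ix D) : ixle i j -> ixle j k -> ixle i k.
Proof. by case: D_sys => _ [_ [+ _]]; apply. Qed.

Lemma dir_inhabited : exists i : ix D, True.
Proof. by case: D_sys => _ [_ [_ []]]. Qed.

Lemma dir_upper (i j : ix D) : exists k, ixle i k /\ ixle j k.
Proof. by case: D_sys => _ [_ [_ [_ []]]]. Qed.

Lemma gam_id (i : ix D) x : gam i i x = x.
Proof. by case: D_sys => _ [_ [_ [_ [_ [_ []]]]]]. Qed.

Lemma gam_diag (i j : ix D) : ixle i j ->
  (forall x y, x <> y -> gam i j x <> gam i j y) /\
  (forall f, In f (Lops i) -> In f (Lops j) /\
     forall xs x0, Rop f xs x0 <-> Rop f (fun k => gam i j (xs k)) (gam i j x0)) /\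
  (forall c, In c (Lcs i) -> In c (Lcs j) /\ forall x, Rcs i c x <-> Rcs j c (gam i j x)).
Proof. by case: D_sys => _ [_ [_ [_ [_ [_ [_ [_ [+ _]]]]]]]]; apply. Qed.

Lemma dir_cst_defined c : exists (i : ix D) x, In c (Lcs i) /\ Rcs i c x.
Proof. by case: D_sys => _ [_ [_ [_ [_ [_ [_ [_ [_ []]]]]]]]]. Qed.

Lemma dir_op_defined f (i : ix D) (xs : 'I_(ar f) -> 'I_(nv i)) :
  exists j x, ixle i j /\ In f (Lops j) /\ Rop f (fun k => gam i j (xs k)) x.
Proof. by case: D_sys => _ [_ [_ [_ [_ [_ [_ [_ [_ [_]]]]]]]]]. Qed.

Lemma iota_gam (i j : ix D) x : ixle i j -> iota j (gam i j x) = iota i x.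
Proof. by move=> ij; apply/iota_eq; exists j; rewrite gam_id; do !split=> //; apply: dir_le_refl. Qed.

Lemma iota_inj (i : ix D) x y : iota i x = iota i y -> x = y.
Proof.
move/iota_eq => [k [ik [_ xy]]]; apply: contrapT => nxy.
exact: (gam_diag ik).1 x y nxy xy.
Qed.

Lemma upper_bound_ord m (ik : 'I_m -> ix D) : exists j, forall k, ixle (ik k) j.
Proof.
elim: m ik => [|m IH] ik; first by have [i0 _] := dir_inhabited; exists i0 => -[].
have [j jub] := IH (fun k => ik (lift ord0 k)).
have [j' [j0 jj']] := dir_upper (ik ord0) j.
by exists j' => k; case: (unliftP ord0 k) => [k' -> | ->] //; apply: dir_le_trans (jub k') jj'.
Qed.

Variables (n : nat) (w : 'I_n -> C).

(* [x] denotes, at stage [i], the value of [t] in [C] computed through the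
   diagram of [i]. *)
Local Unset Implicit Arguments.
Fixpoint represents (i : ix D) (t : term L 'I_n) (x : 'I_(nv i)) : Prop :=
  match t with
  | Var y => iota i x = w y
  | Cnst c => In c (Lcs i) /\ Rcs i c x
  | App f args => exists xs : 'I_(ar f) -> 'I_(nv i),
      (forall k, represents i (args k) (xs k)) /\ In f (Lops i) /\ Rop f xs x
  end.
Local Set Implicit Arguments.

Lemma represents_iota i t x : represents i t x -> iota i x = eval w t.
Proof.
elim: t x => [y|c|f args IH] x //=; first by case; apply: iota_cst.
move=> [xs [xsrep [Lf Rf]]]; rewrite -(iota_op Lf Rf).
by congr (op C f); apply/funext => k; apply: IH.
Qed.

Lemma represents_uniq i t x y : represents i t x -> represents i t y -> x = y.
Proof. by move=> /represents_iota tx /represents_iota ty; apply: iota_inj; rewrite tx ty. Qed.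

Lemma represents_gam i j t x : ixle i j -> represents i t x -> represents j t (gam i j x).
Proof.
move=> ij; have [_ [gop gcst]] := gam_diag ij.
elim: t x => [y|c|f args IH] x /=; first by rewrite iota_gam.
  by case=> /gcst [Lc Rc] /Rc; split.
move=> [xs [xsrep [/gop [Lf Rf] /Rf xsx]]].
by exists (fun k => gam i j (xs k)); split=> // k; apply: IH.
Qed.

Lemma represents_exists t : exists i x, represents i t x.
Proof.
elim: t => [y|c|f args IH]; first by have [i [x ix]] := iota_surj (w y); exists i, x.
  by have [i [x cx]] := dir_cst_defined c; exists i, x.
have /choice [stg stgrep] : forall k, exists p : {i : ix D & 'I_(nv i)},
    represents (tag p) (args k) (tagged p).
  by move=> k; have [i [x r]] := IH k; exists (Tagged (fun i => 'I_(nv i)) x).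
have [j jub] := upper_bound_ord (fun k => tag (stg k)).
have [j' [x [jj' [Lf Rf]]]] :=
  dir_op_defined (i := j) (fun k => gam (tag (stg k)) j (tagged (stg k))).
exists j', x, (fun k => gam j j' (gam (tag (stg k)) j (tagged (stg k)))).
by split=> // k; apply: represents_gam jj' _; apply: represents_gam (jub k) _.
Qed.

Lemma represents_list (ts : list (term L 'I_n)) :
  exists i, forall t, In t ts -> exists x, represents i t x.
Proof.
elim: ts => [|t ts [i its]]; first by have [i0 _] := dir_inhabited; exists i0.
have [j [x tx]] := represents_exists t; have [k [ik jk]] := dir_upper i j.
exists k => s [<- | /its [y sy]]; first by exists (gam j k x); apply: represents_gam.
by exists (gam i k y); apply: represents_gam.
Qed.

Lemma limit_sat (B : Alg L) (phi : qf L 'I_n) :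
  limit_over D B -> holds w phi -> exists v : 'I_n -> B, holds v phi.
Proof.
(* All terms of [phi] and all variables are represented at one stage [i]; a
   realization of the diagram of [i] in [B] then sees the same equalities. *)
move=> DB wphi.
have [i irep] := represents_list (qf_terms phi ++ map Var (enum 'I_n)).
have [u [udist [uop ucst]]] := DB i.
have /choice [xv xvrep] : forall y, exists x, represents i (Var y) x.
  by move=> y; apply/irep/in_or_app; right; apply/in_map/InP; rewrite mem_enum.
have eval_rep t x : represents i t x -> eval (fun y => u (xv y)) t = u x.
  elim: t x => [y|c|f args IH] x /=; first by move/(represents_uniq (xvrep y)) ->.
    by case=> Lc /(ucst c Lc).
  move=> [xs [xsrep [Lf /(uop f Lf)]]] <-.
  by congr (op B f); apply/funext => k; apply: IH.
exists (fun y => u (xv y)); move: wphi; apply: (holds_transfer _).1 => t s ts ss.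
have [x tx] := irep t (in_or_app _ _ _ (or_introl ts)).
have [y sy] := irep s (in_or_app _ _ _ (or_introl ss)).
rewrite (eval_rep _ _ tx) (eval_rep _ _ sy) -(represents_iota tx) -(represents_iota sy).
split=> [/iota_inj -> // | uxy]; congr (iota i _).
by apply: contrapT => xy; apply: udist uxy.
Qed.

End LimitTheory.

Lemma limit_ThE_sub (L : Lang) (D : DirSys L) (B C : Alg L) :
  dir_system D -> limit_over D B -> iso_limit D C -> ThE_sub C B.
Proof.
move=> D_sys DB [iota [iota_eq [iota_surj [iota_op iota_cst]]]] n phi [w wphi].
exact: (limit_sat D_sys iota_eq iota_surj iota_op iota_cst DB wphi).
Qed.

Section FinitePredicates.
Variable T : Type.
Implicit Types X Y : T -> Prop.

Definition fin_pred X : Prop := exists s : list T, forall x, X x <-> In x s.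

Lemma fin_pred0 : fin_pred (fun _ => False).
Proof. by exists nil. Qed.

Lemma fin_pred1 (x : T) : fin_pred (fun y => y = x).
Proof. by exists (x :: nil) => y /=; split=> [-> | [-> | []]]; [left|]. Qed.

Lemma fin_predU X Y : fin_pred X -> fin_pred Y -> fin_pred (fun x => X x \/ Y x).
Proof. by move=> [s sX] [t tY]; exists (s ++ t) => x; rewrite in_app_iff sX tY. Qed.

Definition enum_pred X : list {classic T} :=
  if pselect (fin_pred X) is left Xfin then undup (sval (cid Xfin) : list {classic T}) else [::].

Lemma enum_predP X : fin_pred X -> forall x : {classic T}, X x <-> x \in enum_pred X.
Proof.
rewrite /enum_pred => Xfin0 x; case: pselect => [Xfin | nXfin]; last by case: nXfin.
by case: cid => s sX /=; rewrite mem_undup sX; exact: (rwP (InP x s)).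
Qed.

Lemma enum_pred_uniq X : uniq (enum_pred X).
Proof. by rewrite /enum_pred; case: pselect => // Xfin; apply: undup_uniq. Qed.

End FinitePredicates.

Section StageSystem.
Variables (L : Lang) (C : Alg L).

(* A stage is a finite fragment of [C]: finitely many elements, operation
   symbols and constant symbols; its diagram formula is the atomic diagram of
   the elements with respect to these symbols.  Nonemptiness is required only
   to make [stage_map] total. *)
Record stage := Stage {
  st_elems : C -> Prop;
  st_ops : ops L -> Prop;
  st_csts : csts L -> Prop;
  st_elems_fin : fin_pred st_elems;
  st_ops_fin : fin_pred st_ops;
  st_csts_fin : fin_pred st_csts;
  st_elems_inhabited : inhabited C -> exists x, st_elems x }.

Implicit Types i j : stage.

Definition stage_le i j : Prop :=
  (forall x, st_elems i x -> st_elems j x) /\ (forall f, st_ops i f -> st_ops j f) /\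
  (forall c, st_csts i c -> st_csts j c).

Lemma stage_le_refl i : stage_le i i.
Proof. by do !split. Qed.

Lemma stage_le_trans i j (k : stage) : stage_le i j -> stage_le j k -> stage_le i k.
Proof. by move=> [? [? ?]] [? [? ?]]; split; [|split]; auto. Qed.

Lemma stage_le_anti i j : stage_le i j -> stage_le j i -> i = j.
Proof.
case: i => X O K Xf Of Kf Xi; case: j => X' O' K' Xf' Of' Kf' Xi'.
move=> [/= XX' [OO' KK']] [/= X'X [O'O K'K]].
have eX : X = X' by apply/predeqP => x; split; [apply: XX' | apply: X'X].
have eO : O = O' by apply/predeqP => f; split; [apply: OO' | apply: O'O].
have eK : K = K' by apply/predeqP => c; split; [apply: KK' | apply: K'K].
by subst; f_equal; apply: Prop_irrelevance.
Qed.

Definition stage_size i : nat := size (enum_pred (st_elems i)).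

Definition stage_elem i (x : 'I_(stage_size i)) : C :=
  tnth (in_tuple (enum_pred (st_elems i))) x.

Lemma stage_elem_in i x : st_elems i (@stage_elem i x).
Proof. by apply/(enum_predP (st_elems_fin i)); apply: mem_tnth. Qed.

Lemma stage_elem_inj i : injective (@stage_elem i).
Proof. exact: (elimT (tuple_uniqP (in_tuple _)) (enum_pred_uniq _)). Qed.

Lemma stage_elem_surj i c : st_elems i c -> exists x, @stage_elem i x = c.
Proof.
move/(enum_predP (st_elems_fin i)) => ci.
have ltc : index (c : {classic C}) (enum_pred (st_elems i)) < stage_size i.
  by rewrite index_mem.
by exists (Ordinal ltc); rewrite /stage_elem (tnth_nth (c : {classic C})) nth_index.
Qed.

Lemma stage_map_ex i j (x : 'I_(stage_size i)) :
  exists y, st_elems j (stage_elem x) -> @stage_elem j y = stage_elem x.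
Proof.
have [c jc] := st_elems_inhabited j (inhabits (stage_elem x)).
have [/stage_elem_surj [y yx] | njx] := pselect (st_elems j (stage_elem x)).
  by exists y.
by have [y _] := stage_elem_surj jc; exists y => /njx.
Qed.

(* Outside the case [i <= j] the value of [stage_map i j] is irrelevant. *)
Definition stage_map i j : 'I_(stage_size i) -> 'I_(stage_size j) :=
  projT1 (choice (@stage_map_ex i j)).
Arguments stage_map : clear implicits.

Lemma stage_mapE i j x : stage_le i j -> stage_elem (stage_map i j x) = stage_elem x.
Proof. by move=> [ij _]; rewrite /stage_map; case: choice => h hP /=; apply/hP/ij/stage_elem_in. Qed.

Definition stage_ops_list i : list (ops L) := enum_pred (st_ops i).
Definition stage_csts_list i : list (csts L) := enum_pred (st_csts i).

Lemma In_stage_ops i f : In f (stage_ops_list i) <-> st_ops i f.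
Proof. by rewrite (enum_predP (st_ops_fin i)); exact: (rwP (InP (f : {classic _}) _)). Qed.

Lemma In_stage_csts i c : In c (stage_csts_list i) <-> st_csts i c.
Proof. by rewrite (enum_predP (st_csts_fin i)); exact: (rwP (InP (c : {classic _}) _)). Qed.

Definition stage_Rop i f (xs : 'I_(ar f) -> 'I_(stage_size i)) (x0 : 'I_(stage_size i)) : Prop :=
  op C f (fun k => stage_elem (xs k)) = stage_elem x0.

Definition stage_Rcs i c (x : 'I_(stage_size i)) : Prop := stage_elem x = cst C c.

Definition stage_system : DirSys L :=
  @MkDirSys L stage stage_le stage_size stage_ops_list stage_csts_list
    stage_Rop stage_Rcs stage_map.

Definition point_stage (x : C) (O : ops L -> Prop) (K : csts L -> Prop)
  (Ofin : fin_pred O) (Kfin : fin_pred K) : stage :=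
  @Stage (fun y => y = x) O K (fin_pred1 x) Ofin Kfin (fun _ => ex_intro _ x erefl).

Lemma stage_union_inhabited i j :
  inhabited C -> exists x, st_elems i x \/ st_elems j x.
Proof. by move/(st_elems_inhabited i) => [x ix]; exists x; left. Qed.

Definition stage_union i j : stage :=
  @Stage (fun x => st_elems i x \/ st_elems j x) (fun f => st_ops i f \/ st_ops j f)
    (fun c => st_csts i c \/ st_csts j c)
    (fin_predU (st_elems_fin i) (st_elems_fin j)) (fin_predU (st_ops_fin i) (st_ops_fin j))
    (fin_predU (st_csts_fin i) (st_csts_fin j)) (@stage_union_inhabited i j).

Lemma stage_union_le i j : stage_le i (stage_union i j) /\ stage_le j (stage_union i j).
Proof. by split; (split; [|split]) => ? ?; [left | left | left | right | right | right]. Qed.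

Lemma stage_exists : exists i : stage, True.
Proof.
have [[c] | noC] := pselect (inhabited C).
  by exists (point_stage c (fin_pred0 _) (fin_pred0 _)).
by exists (@Stage (fun _ => False) (fun _ => False) (fun _ => False)
  (fin_pred0 _) (fin_pred0 _) (fin_pred0 _) (fun Cne => False_ind _ (noC Cne))).
Qed.

Lemma stage_system_dir : dir_system stage_system.
Proof.
have mapE i j x := @stage_mapE i j x.
split; first exact: stage_le_refl.
split; first exact: stage_le_anti.
split; first exact: stage_le_trans.
split; first exact: stage_exists.
split; first by move=> i j; exists (stage_union i j); apply: stage_union_le.
split.
  move=> i; exists C, (@stage_elem i); split; first by move=> x y xy /(@stage_elem_inj i).
  by split=> [f _ xs x0 | c _ x]; apply: iff_refl.
split; first by move=> i x; apply: stage_elem_inj; rewrite mapE //; apply: stage_le_refl.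
split.
  move=> i j k x ij jk; apply: stage_elem_inj.
  by rewrite !mapE //; apply: stage_le_trans ij jk.
split.
  move=> i j ij; have [_ [ijO ijK]] := ij; split.
    by move=> x y xy /(congr1 (@stage_elem j)); rewrite !mapE // => /(@stage_elem_inj i).
  split=> [f /In_stage_ops /ijO /In_stage_ops jf | c /In_stage_csts /ijK /In_stage_csts jc].
    split=> // xs x0; rewrite /= /stage_Rop mapE //.
    have -> // : (fun k => stage_elem (stage_map i j (xs k))) = (fun k => stage_elem (xs k)).
    by apply/funext => k; rewrite mapE.
  by split=> // x; rewrite /= /stage_Rcs mapE.
split.
  move=> c; pose i := point_stage (cst C c) (fin_pred0 _) (fin_pred1 c).
  have [x xc] := @stage_elem_surj i (cst C c) erefl.
  by exists i, x; split=> //; apply/In_stage_csts.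
move=> f i xs; pose v := op C f (fun k => stage_elem (xs k)).
pose j := stage_union i (point_stage v (fin_pred1 f) (fin_pred0 _)).
have [ij _] := stage_union_le i (point_stage v (fin_pred1 f) (fin_pred0 _)).
have [x xv] := @stage_elem_surj j v (or_intror erefl).
exists j, x; split=> //; split; first by apply/In_stage_ops; right.
by rewrite /= /stage_Rop xv /v; congr (op C f); apply/funext => k; apply: mapE.
Qed.


Lemma stage_system_iso : iso_limit stage_system C.
Proof.
exists (@stage_elem); split.
  move=> i j x y; split=> [xy | [k [ik [jk xyk]]]].
    have [ij_i ij_j] := stage_union_le i j.
    by exists (stage_union i j); do !split=> //; apply: stage_elem_inj; rewrite !stage_mapE.
  by rewrite -(stage_mapE x ik) -(stage_mapE y jk); congr stage_elem.
split.
  move=> c; pose i := point_stage c (fin_pred0 _) (fin_pred0 _).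
  by have [x xc] := @stage_elem_surj i c erefl; exists i, x.
by split=> [i f xs x0 _ | i c x _].
Qed.

Lemma stage_system_limit (B : Alg L) : discriminated C B -> limit_over stage_system B.
Proof.
move=> CB i.
pose W := map (@stage_elem i) (enum 'I_(stage_size i)) ++
  flat_map (fun f => map (fun xs : {ffun 'I_(ar f) -> 'I_(stage_size i)} =>
                            op C f (fun k => stage_elem (xs k)))
                         (enum {ffun 'I_(ar f) -> 'I_(stage_size i)}))
    (stage_ops_list i) ++
  map (cst C) (stage_csts_list i).
have Wel (x : 'I_(stage_size i)) : In (stage_elem x) W.
  by apply/in_or_app; left; apply: in_map; apply/InP; rewrite mem_enum.
have Wop f (xs : 'I_(ar f) -> 'I_(stage_size i)) : In f (stage_ops_list i) -> In (op C f (fun k => stage_elem (xs k))) W.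
  move=> Lf; apply/in_or_app; right; apply/in_or_app; left; apply/in_flat_map.
  exists f; split=> //; apply/in_map_iff; exists [ffun k => xs k]; split.
    by congr (op C f); apply/funext => k; rewrite ffunE.
  by apply/InP; rewrite mem_enum.
have Wcs c : In c (stage_csts_list i) -> In (cst C c) W.
  by move=> Lc; apply/in_or_app; right; apply/in_or_app; right; apply: in_map.
have [h [[hop hcst] hinj]] := CB W.
exists (fun x => h (stage_elem x)); split.
  by move=> x y xy /(hinj _ _ (Wel x) (Wel y)) /(@stage_elem_inj i).
split=> [f Lf xs x0 | c Lc x]; rewrite /= /stage_Rop /stage_Rcs -?hop -?hcst.
  by split=> [-> // | /hinj]; apply; [apply: Wop | apply: Wel].
by split=> [-> // | /hinj]; apply; [apply: Wel | apply: Wcs].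
Qed.

End StageSystem.



Theorem theoremB (L : Lang) (A : Alg L) (B : Alg (LA A)) (C : Alg (LA A)) :
  AAlg B -> eq_noetherian B -> AAlg C -> fin_gen C ->
  let P1 := ThU_sub B C in
  let P2 := ThE_sub C B in
  let P3 := exists (I : Type) (U : (I -> Prop) -> Prop), ultrafilter U /\
              exists h : C -> ultrapower B U, embedding h in
  let P4 := discriminated C B in
  let P5 := exists D : DirSys (LA A), dir_system D /\ limit_over D B /\ iso_limit D C in
  let P6 := exists (n : nat) (p : lit (LA A) 'I_n -> Prop),
              complete_atomic_type B p /\ isomorphic C (type_alg p) in
  let P7 := exists (n : nat) (S : equation (LA A) n -> Prop),
              irreducible (Vset (B := B) S) /\ isomorphic C (coord_alg (Vset (B := B) S)) in
  (P1 <-> P2) /\ (P1 <-> P3) /\ (P1 <-> P4) /\ (P1 <-> P5) /\ (P1 <-> P6) /\ (P1 <-> P7).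
Proof.
move=> _ B_noeth _ [n [g gen]] P1 P2 P3 P4 P5 P6 P7.
have P12 : P1 <-> P2 := ThU_sub_ThE_sub B C.
have P27 : P2 -> P7.
  move=> CB; exists n, (relations g); split; last exact: relations_coord_iso.
  exact/fin_generic_irreducible/relations_fin_generic.
have P74 : P7 -> P4.
  move=> [m [S [Sirr [h /isomorphism_embedding hemb]]]].
  exact/(embedding_discriminated hemb)/fin_generic_coord_discriminated/irreducible_fin_generic.
have P42 : P4 -> P2 := @discriminated_ThE_sub _ C B.
have P24 : P2 -> P4 := fun CB => P74 (P27 CB).
split=> //; split.
  split=> [/P12/P24/discriminated_ultrapower_embedding // | [I [U [U_ultra [h hemb]]]]].
  exact/P12/(ultrapower_embedding_ThE_sub U_ultra hemb).
split; first by split=> [/P12/P24 | /P42/P12].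
split.
  split=> [/P12/P24 CB | [D [D_sys [DB DC]]]]; last exact/P12/(limit_ThE_sub D_sys DB DC).
  exists (stage_system C); split; first exact: stage_system_dir.
  by split; [apply: stage_system_limit | apply: stage_system_iso].
split.
  split=> [BC | [m [p [p_type Cp]]]]; last exact/P12/(complete_atomic_type_ThE_sub p_type Cp).
  by exists n, (atomic_type g); split; [apply: atomic_type_complete | apply: quot_kernel_iso].
by split=> [/P12/P27 | /P74/P42/P12].
Qed.
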